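(* Let $S$ be any one of the subspecies $33_3$, $33_4$, $34$, $35_3$, $35_4$, $36_1$, $36_2$, $36_s$, $37$, $38$, $39$ of isonemal fabrics. Then there exist orders $n$ such that every isonemal fabric of subspecies $S$ and of order $n$ whose symmetry group is based on a level-1 lattice unit of area $5$ (i.e. $M_1^2+N_1^2=5$) can be perfectly coloured by thin striping with $5$ colours in such a way that the set of redundant cells is arranged as the $(5,3)$ satin of order $5$.
   Context: Fabrics. Strands are parallel bands of unit width: warps are vertical, wefts horizontal, and the warp $\{i\}\times\mathbb{R}$-band and weft $\mathbb{R}\times\{j\}$-band cross in the unit square cell $(i,j)$, $i,j\in\mathbb{Z}$. A (pre)fabric specifies at every cell which of the two crossing strands lies on top as seen from a fixed side (the obverse); its design colours cell $(i,j)$ dark if the warp is on top and pale if the weft is on top. Designs are doubly periodic; a fabric is a prefabric that does not fall apart into separate layers. The order of a fabric is the common period of the dark/pale sequence along its strands. Symmetries. A symmetry is a pair $(g,\epsilon)$ where $g$ is an isometry of the plane mapping the set of strands onto itself and $\epsilon$ is either the identity or $\tau$, the reflection in the plane of the fabric (which reverses which strand is on top in every cell), such that the composite maps the fabric onto itself (strands to strands, preserving all over/under relations if $\epsilon$ is the identity, reversing all of them if $\epsilon=\tau$). They form the symmetry group $G_1$; those with $\epsilon$ the identity are side-preserving, the others side-reversing. $G_2$ denotes the group of isometric parts $g$. A fabric is isonemal if $G_1$ acts transitively on its strands. Species 33–39. These are the isonemal fabrics whose symmetry group contains quarter turns (possibly composed with $\tau$) but no reflections or glide-reflections (group type $p4$).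 A lattice unit of $G_1$ is a square whose corners are quarter-turn centres and whose sides are the vectors $(M,N)$, $(-N,M)$ generating the translation lattice of $G_1$; its centre is also a quarter-turn centre. A lattice unit is of level 1 if $M,N$ are relatively prime and of opposite parity. If the level-1 unit has side vectors $v=(M_1,N_1)$, $w=(-N_1,M_1)$, the level-2 unit (with the same centre) has side vectors $v+w$, $v-w$; the level-3 unit is the level-1 unit doubled in size, and the level-4 unit is the level-2 unit doubled; the fabric's group is said to be based on the level-1 unit of area $M_1^2+N_1^2$. A quarter-turn centre is marked $\square$ if the quarter turn about it is a side-preserving symmetry and $\blacksquare$ if it becomes a symmetry only when composed with $\tau$. The subspecies are defined by the level of the $G_1$ lattice unit and the type of quarter-turn centres at its corners and centre: $39$: level 1, one of corners/centre $\square$ and the other $\blacksquare$; $36_1$: level 1, all $\blacksquare$; $36_2$: level 2, all $\blacksquare$, quarter-turn centres at cell corners; $36_s$: level 2, all $\blacksquare$, quarter-turn centres at cell centres; $34$: level 2, all $\square$; $38$: level 3, mixed $\square$ and $\blacksquare$; $33_3$: level 3, all $\square$; $35_3$: level 3, all $\blacksquare$; $33_4$: level 4, all $\square$; $35_4$: level 4, all $\blacksquare$; $37$: level 4, mixed $\square$ and $\blacksquare$. Colouring. A colouring assigns a colour to each strand; it is perfect if every symmetry of the fabric permutes colours coherently (whenever it maps one strand of colour $a$ to a strand of colour $b$, it maps every strand of colour $a$ to a strand of colour $b$). Thin striping with $p$ colours colours consecutive parallel strands periodically $c_1,c_2,\dots,c_p,c_1,\dots$ in each direction, using the same $p$ colours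 for warps and wefts (the orders of the colours in the two directions may differ). A cell is redundant if its warp and weft have the same colour. The $(5,3)$ satin is the order-5 design whose dark cells are the cells $(i,j)$ with $j\equiv 2i \pmod 5$ (equivalently each row is the previous row displaced by 2 or 3 cells); ''redundant cells arranged as the $(5,3)$ satin'' means the set of redundant cells is congruent to this set of dark cells. *)

From Stdlib Require Import ZArith Bool.
Open Scope Z_scope.

(** A design: [D i j = true] iff cell (i,j) is dark, i.e. the warp
    (vertical strand number i) is on top of the weft (horizontal strand
    number j) at their crossing, as seen from the obverse. *)
Definition design := Z -> Z -> bool.

Definition doubly_periodic (D : design) : Prop :=
  exists p, 0 < p /\ forall i j, D (i + p) j = D i j /\ D i (j + p) = D i j.

Inductive strand : Type := Warp (i : Z) | Weft (j : Z).

Definition falls_apart (D : design) : Prop :=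
  exists A : strand -> Prop, (exists s, A s) /\ (exists s, ~ A s) /\
    forall i j, (A (Warp i) -> ~ A (Weft j) -> D i j = true) /\
                (A (Weft j) -> ~ A (Warp i) -> D i j = false).

Definition is_fabric (D : design) : Prop :=
  doubly_periodic D /\ ~ falls_apart D.

(** Isometries of the plane mapping the set of strands onto itself,
    described by their (bijective) action on cells: cell (i,j) is sent to
    (s1 i + t1, s2 j + t2) if [swap] is false and to (s1 j + t1, s2 i + t2)
    if [swap] is true, where s_k = -1 if [negk] else 1.  (Cell centres
    sit at the integer points; linear parts are the 8 elements of D4.) *)
Record gmap : Type := GMap { g_swap : bool; g_neg1 : bool; g_neg2 : bool;
                             g_t1 : Z; g_t2 : Z }.

Definition sgn (b : bool) (x : Z) : Z := if b then - x else x.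

Definition gapp (g : gmap) (c : Z * Z) : Z * Z :=
  let (i, j) := c in
  if g_swap g then (sgn (g_neg1 g) j + g_t1 g, sgn (g_neg2 g) i + g_t2 g)
  else (sgn (g_neg1 g) i + g_t1 g, sgn (g_neg2 g) j + g_t2 g).

Definition gstrand (g : gmap) (s : strand) : strand :=
  match s with
  | Warp i => if g_swap g then Weft (sgn (g_neg2 g) i + g_t2 g)
              else Warp (sgn (g_neg1 g) i + g_t1 g)
  | Weft j => if g_swap g then Warp (sgn (g_neg1 g) j + g_t1 g)
              else Weft (sgn (g_neg2 g) j + g_t2 g)
  end.

(** Orientation-reversing (determinant -1): reflections and glide-reflections. *)
Definition reverses (g : gmap) : bool :=
  if g_swap g then Bool.eqb (g_neg1 g) (g_neg2 g)
  else negb (Bool.eqb (g_neg1 g) (g_neg2 g)).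

Definition is_quarter_turn (g : gmap) : bool :=
  g_swap g && negb (Bool.eqb (g_neg1 g) (g_neg2 g)).

(** (g, eps) is a symmetry of D; eps = true means composed with tau.
    The strand on top at c must be mapped to the strand on top at g c
    (eps = false), resp. to the strand underneath (eps = true).  Since g
    exchanges warps and wefts iff [g_swap g], this reads: *)
Definition is_sym (D : design) (g : gmap) (eps : bool) : Prop :=
  forall i j, D (fst (gapp g (i, j))) (snd (gapp g (i, j)))
              = xorb (D i j) (xorb (g_swap g) eps).

Definition isonemal (D : design) : Prop :=
  forall s s', exists g eps, is_sym D g eps /\ gstrand g s = s'.

Definition p4_type (D : design) : Prop :=
  (exists g eps, is_sym D g eps /\ is_quarter_turn g = true) /\
  (forall g eps, is_sym D g eps -> reverses g = false).

Definition transl (a b : Z) : gmap := GMap false false false a b.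

(** Quarter turn by +90 degrees about the point with DOUBLED coordinates
    (P1,P2) (cell (i,j) has centre (2i,2j), cell corners have odd doubled
    coordinates); meaningful when P1 + P2 is even. *)
Definition qturn (P1 P2 : Z) : gmap :=
  GMap true true false ((P1 + P2) / 2) ((P2 - P1) / 2).

(** Lattice unit of G1 with corner at doubled point (P1,P2) and sides
    v = (M,N), w = (-N,M).  Its centre, in doubled coordinates, is
    (P1,P2) + v + w. *)
Definition lu_centre (P1 P2 M N : Z) : Z * Z := (P1 + M - N, P2 + N + M).

Definition lattice_unit (D : design) (P1 P2 M N : Z) : Prop :=
  Z.even (P1 + P2) = true /\
  (forall a b, (exists eps, is_sym D (transl a b) eps) <->
               exists x y, a = x * M - y * N /\ b = x * N + y * M) /\
  (exists eps, is_sym D (qturn P1 P2) eps) /\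
  (exists eps, is_sym D (qturn (fst (lu_centre P1 P2 M N))
                               (snd (lu_centre P1 P2 M N))) eps).

Definition level1 (M N : Z) : Prop := Z.gcd M N = 1 /\ Z.odd M <> Z.odd N.

Inductive level : Type := L1 | L2 | L3 | L4.

(** Side vector of the level-L unit derived from the level-1 unit with
    sides (M1,N1), (-N1,M1). *)
Definition lbase (L : level) (M1 N1 : Z) : Z * Z :=
  match L with
  | L1 => (M1, N1)
  | L2 => (M1 - N1, M1 + N1)
  | L3 => (2 * M1, 2 * N1)
  | L4 => (2 * (M1 - N1), 2 * (M1 + N1))
  end.

Definition has_level (L : level) (M N : Z) : Prop :=
  exists M1 N1, level1 M1 N1 /\ (M, N) = lbase L M1 N1.

Inductive subspecies : Type :=
  S33_3 | S33_4 | S34 | S35_3 | S35_4 | S36_1 | S36_2 | S36_s | S37 | S38 | S39.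

(** Defining conditions; eP / eQ : type of corner / centre quarter-turn
    centres (false = white square, side-preserving; true = black square,
    composed with tau); [corner] : the corner lies at a cell corner. *)
Definition subspecies_cond (S : subspecies) (L : level) (eP eQ corner : bool)
  : Prop :=
  match S with
  | S39   => L = L1 /\ eP <> eQ
  | S36_1 => L = L1 /\ eP = true /\ eQ = true
  | S36_2 => L = L2 /\ eP = true /\ eQ = true /\ corner = true
  | S36_s => L = L2 /\ eP = true /\ eQ = true /\ corner = false
  | S34   => L = L2 /\ eP = false /\ eQ = false
  | S38   => L = L3 /\ eP <> eQ
  | S33_3 => L = L3 /\ eP = false /\ eQ = false
  | S35_3 => L = L3 /\ eP = true /\ eQ = true
  | S33_4 => L = L4 /\ eP = false /\ eQ = false
  | S35_4 => L = L4 /\ eP = true /\ eQ = true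
  | S37   => L = L4 /\ eP <> eQ
  end.

Definition in_subspecies (D : design) (S : subspecies) : Prop :=
  is_fabric D /\ isonemal D /\ p4_type D /\
  exists P1 P2 M N L eP eQ,
    lattice_unit D P1 P2 M N /\ has_level L M N /\
    is_sym D (qturn P1 P2) eP /\
    is_sym D (qturn (fst (lu_centre P1 P2 M N)) (snd (lu_centre P1 P2 M N))) eQ /\
    subspecies_cond S L eP eQ (Z.odd P1).

Definition has_period (f : Z -> bool) (p : Z) : Prop := forall k, f (k + p) = f k.

Definition min_period (f : Z -> bool) (n : Z) : Prop :=
  0 < n /\ has_period f n /\ forall m, 0 < m < n -> ~ has_period f m.

Definition has_order (D : design) (n : Z) : Prop :=
  (forall i, min_period (fun j => D i j) n) /\
  (forall j, min_period (fun i => D i j) n).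

Definition based_on_area (D : design) (a : Z) : Prop :=
  exists P1 P2 M N L M1 N1,
    lattice_unit D P1 P2 M N /\ level1 M1 N1 /\ (M, N) = lbase L M1 N1 /\
    M1 * M1 + N1 * N1 = a.

Definition colouring := strand -> Z.

Definition perfect (D : design) (col : colouring) : Prop :=
  forall g eps, is_sym D g eps ->
    forall s s', col s = col s' -> col (gstrand g s) = col (gstrand g s').

Definition perm_on (p : Z) (f : Z -> Z) : Prop :=
  (forall k, 0 <= k < p -> 0 <= f k < p) /\
  (forall k l, 0 <= k < p -> 0 <= l < p -> f k = f l -> k = l).

Definition thin_striping (p : Z) (col : colouring) : Prop :=
  exists sigma rho, perm_on p sigma /\ perm_on p rho /\
    (forall i, col (Warp i) = sigma (i mod p)) /\
    (forall j, col (Weft j) = rho (j mod p)).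

Definition redundant (col : colouring) (i j : Z) : Prop :=
  col (Warp i) = col (Weft j).

Definition satin53 (i j : Z) : Prop := (j - 2 * i) mod 5 = 0.

Definition redundant_as_satin53 (col : colouring) : Prop :=
  exists g : gmap, forall i j,
    redundant col i j <-> exists i' j', satin53 i' j' /\ gapp g (i', j') = (i, j).

(* In a group of type p4 every symmetry is a translation of G1 followed by a power of a
   quarter turn of G1.  The translations lie in the level-1 lattice spanned by (M1, N1) and
   (-N1, M1); when M1^2 + N1^2 = 5 this lattice is {(a, b) | b = k a (mod 5)} for a square
   root k of -1 modulo 5.  Colour warp i by i mod 5 and weft j by k (c - j) mod 5: a
   translation (a, b) adds a to every colour and, for a suitable c, the quarter turn acts on
   colours as x |-> -k x + const, so every symmetry permutes the colours coherently.  The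
   redundant cells are those with j = k i + c (mod 5), a copy of the (5,3) satin.  Fabrics of
   each subspecies with such a group exist: explicit periodic designs are given, and their
   defining properties are decided by computation on one period. *)

From Stdlib Require Import ZArith Bool List String Ascii Lia.
Import ListNotations.
Open Scope Z_scope.

(** * The symmetry group of a design *)

Definition ginv (g : gmap) : gmap :=
  match g with GMap sw n1 n2 t1 t2 =>
    if sw then GMap true n2 n1 (- sgn n2 t2) (- sgn n1 t1)
    else GMap false n1 n2 (- sgn n1 t1) (- sgn n2 t2) end.

Definition gcomp (g h : gmap) : gmap :=
  GMap (xorb (g_swap g) (g_swap h))
       (xorb (g_neg1 g) (if g_swap g then g_neg2 h else g_neg1 h))
       (xorb (g_neg2 g) (if g_swap g then g_neg1 h else g_neg2 h))
       (fst (gapp g (gapp h (0, 0)))) (snd (gapp g (gapp h (0, 0)))).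

Definition linear_part (g : gmap) : bool * bool * bool :=
  (g_swap g, g_neg1 g, g_neg2 g).

Lemma gapp_ginv g c : gapp g (gapp (ginv g) c) = c.
Proof. destruct g as [[] [] [] t1 t2], c as [i j]; simpl; f_equal; ring. Qed.

Lemma gapp_gcomp g h c : gapp (gcomp g h) c = gapp g (gapp h c).
Proof.
  destruct g as [[] [] [] t1 t2], h as [[] [] [] u1 u2], c as [i j]; simpl; f_equal; ring.
Qed.

Lemma gstrand_ginv_l g s : gstrand (ginv g) (gstrand g s) = s.
Proof. destruct g as [[] [] [] t1 t2], s as [i|j]; simpl; f_equal; ring. Qed.

Lemma gstrand_gcomp g h s : gstrand (gcomp g h) s = gstrand g (gstrand h s).
Proof.
  destruct g as [[] [] [] t1 t2], h as [[] [] [] u1 u2], s as [i|j]; simpl; f_equal; ring.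
Qed.

Lemma gcomp_ginv_transl g h :
  linear_part g = linear_part h -> exists a b, gcomp g (ginv h) = transl a b.
Proof.
  destruct g as [[] [] [] t1 t2], h as [[] [] [] u1 u2]; intros E; try discriminate;
    do 2 eexists; reflexivity.
Qed.

Lemma is_sym_ginv D g eps : is_sym D g eps -> is_sym D (ginv g) eps.
Proof.
  intros H i j.
  pose proof (H (fst (gapp (ginv g) (i, j))) (snd (gapp (ginv g) (i, j)))) as E.
  rewrite <- surjective_pairing, gapp_ginv in E; cbn [fst snd] in E.
  replace (g_swap (ginv g)) with (g_swap g) by (destruct g as [[] ? ? ? ?]; reflexivity).
  rewrite E, xorb_assoc, xorb_nilpotent, xorb_false_r. reflexivity.
Qed.

Lemma is_sym_gcomp D g h eg eh :
  is_sym D g eg -> is_sym D h eh -> is_sym D (gcomp g h) (xorb eg eh).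
Proof.
  intros Hg Hh i j. rewrite gapp_gcomp.
  pose proof (Hg (fst (gapp h (i, j))) (snd (gapp h (i, j)))) as E.
  rewrite <- surjective_pairing in E. rewrite E, Hh; cbn [gcomp g_swap].
  destruct (D i j), (g_swap g), (g_swap h), eg, eh; reflexivity.
Qed.

Lemma is_sym_transl0 D : is_sym D (transl 0 0) false.
Proof. intros i j; simpl. rewrite !Z.add_0_r. destruct (D i j); reflexivity. Qed.

Lemma is_sym_transl_mul D a b e : is_sym D (transl a b) e ->
  forall x, exists e', is_sym D (transl (x * a) (x * b)) e'.
Proof.
  intros H x. induction x as [|x [e' IH]|x [e' IH]] using Z.peano_ind.
  - exists false. apply is_sym_transl0.
  - exists (xorb e e').
    replace (Z.succ x * a) with (x * a + a) by ring.
    replace (Z.succ x * b) with (x * b + b) by ring.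
    exact (is_sym_gcomp D _ _ _ _ H IH).
  - exists (xorb e e').
    replace (Z.pred x * a) with (x * a + - a) by (unfold Z.pred; ring).
    replace (Z.pred x * b) with (x * b + - b) by (unfold Z.pred; ring).
    exact (is_sym_gcomp D _ _ _ _ (is_sym_ginv D _ _ H) IH).
Qed.

Definition lattice_point (M N a b : Z) : Prop :=
  exists x y, a = x * M - y * N /\ b = x * N + y * M.

Lemma is_sym_lattice_transl D M N eM eN :
  is_sym D (transl M N) eM -> is_sym D (transl (- N) M) eN ->
  forall a b, lattice_point M N a b -> exists eps, is_sym D (transl a b) eps.
Proof.
  intros HM HN a b [x [y [-> ->]]].
  destruct (is_sym_transl_mul D _ _ _ HM x) as [e1 H1].
  destruct (is_sym_transl_mul D _ _ _ HN y) as [e2 H2].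
  exists (xorb e2 e1).
  replace (x * M - y * N) with (x * M + y * - N) by ring.
  exact (is_sym_gcomp D _ _ _ _ H2 H1).
Qed.

Fixpoint gpow (q : gmap) (m : nat) : gmap :=
  match m with O => transl 0 0 | S m => gcomp q (gpow q m) end.

Lemma is_sym_gpow D q e m : is_sym D q e -> exists eps, is_sym D (gpow q m) eps.
Proof.
  intros Hq. induction m as [|m [eps IH]]; simpl.
  - exists false. apply is_sym_transl0.
  - eexists. exact (is_sym_gcomp D _ _ _ _ Hq IH).
Qed.

Lemma rotation_linear_part g a1 a2 :
  reverses g = false ->
  exists m, linear_part g = linear_part (gpow (GMap true true false a1 a2) m).
Proof.
  destruct g as [[] [] [] t1 t2]; intros H; try discriminate;
    [exists 1%nat | exists 3%nat | exists 2%nat | exists 0%nat]; reflexivity.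
Qed.

Lemma isonemal_of_warp0_orbit D :
  (forall s, exists g eps, is_sym D g eps /\ gstrand g (Warp 0) = s) -> isonemal D.
Proof.
  intros H s s'. destruct (H s) as [g [e [Hg Es]]], (H s') as [g' [e' [Hg' Es']]].
  exists (gcomp g' (ginv g)), (xorb e' e). split.
  - apply is_sym_gcomp; [exact Hg' | apply is_sym_ginv, Hg].
  - rewrite gstrand_gcomp, <- Es, gstrand_ginv_l. exact Es'.
Qed.

(** * Perfect striping with five colours *)

Definition on_slope5 (k a b : Z) : Prop := (b - k * a) mod 5 = 0.

Lemma area5_entries M1 N1 : M1 * M1 + N1 * N1 = 5 ->
  (M1 = 1 \/ M1 = -1 \/ M1 = 2 \/ M1 = -2) /\ (N1 = 1 \/ N1 = -1 \/ N1 = 2 \/ N1 = -2).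
Proof.
  intros H. assert (-2 <= M1 <= 2) by nia. assert (-2 <= N1 <= 2) by nia.
  assert (M1 <> 0) by (intros ->; nia). assert (N1 <> 0) by (intros ->; nia). lia.
Qed.

Lemma lbase_area5_slope L M1 N1 M N :
  M1 * M1 + N1 * N1 = 5 -> (M, N) = lbase L M1 N1 ->
  exists k, (k = 2 \/ k = 3) /\ on_slope5 k M N /\ on_slope5 k (- N) M.
Proof.
  intros H5 HL. unfold on_slope5.
  destruct (area5_entries _ _ H5) as [HM HN].
  destruct HM as [-> | [-> | [-> | ->]]]; destruct HN as [-> | [-> | [-> | ->]]];
    try discriminate; destruct L; injection HL as -> ->;
    first [exists 2; split; [lia | split; reflexivity]
          | exists 3; split; [lia | split; reflexivity]].
Qed.

Lemma on_slope5_lattice k M N a b :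
  on_slope5 k M N -> on_slope5 k (- N) M -> lattice_point M N a b -> on_slope5 k a b.
Proof.
  unfold on_slope5. intros HM HN [x [y [-> ->]]].
  replace (x * N + y * M - k * (x * M - y * N)) with (x * (N - k * M) + y * (M - k * - N))
    by ring.
  rewrite Z.add_mod, (Z.mul_mod x), (Z.mul_mod y), HM, HN by lia.
  rewrite !Z.mul_0_r. reflexivity.
Qed.

Ltac mod5 := Z.div_mod_to_equations; lia.

Definition stripe5 (k c : Z) : colouring :=
  fun s => match s with Warp i => i mod 5 | Weft j => (k * (c - j)) mod 5 end.

Lemma stripe5_thin k c : k = 2 \/ k = 3 -> thin_striping 5 (stripe5 k c).
Proof.
  intros Hk. exists (fun x => x), (fun x => (k * (c - x)) mod 5).
  split; [|split; [|split]]; try (intros; reflexivity).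
  - split; intros; lia.
  - split; [intros; apply Z.mod_pos_bound; lia|].
    intros x y Hx Hy E. destruct Hk as [-> | ->]; mod5.
  - intros j. simpl. destruct Hk as [-> | ->]; mod5.
Qed.

Lemma stripe5_satin53 k c : k = 2 \/ k = 3 -> redundant_as_satin53 (stripe5 k c).
Proof.
  unfold redundant_as_satin53, redundant, satin53, stripe5.
  intros [-> | ->]; [exists (GMap false false false 0 c) | exists (GMap false true false 0 c)];
    intros i j; cbn [gapp sgn g_swap g_neg1 g_neg2 g_t1 g_t2]; split.
  - intros E. exists i, (j - c). split; [mod5 | f_equal; ring].
  - intros [i' [j' [Hs E]]]. injection E as <- <-. mod5.
  - intros E. exists (- i), (j - c). split; [mod5 | f_equal; ring].
  - intros [i' [j' [Hs E]]]. injection E as <- <-. mod5.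
Qed.

Definition respects (col : colouring) (f : strand -> strand) : Prop :=
  forall s s', col s = col s' -> col (f s) = col (f s').

Lemma respects_affine col f u v :
  (forall s, col (f s) = (u * col s + v) mod 5) -> respects col f.
Proof. intros H s s' E. rewrite !H, E. reflexivity. Qed.

Lemma respects_gpow col q m : respects col (gstrand q) -> respects col (gstrand (gpow q m)).
Proof.
  intros Hq. induction m as [|m IH]; intros s s' E; simpl.
  - destruct s, s'; simpl; rewrite !Z.add_0_r; exact E.
  - rewrite !gstrand_gcomp. apply Hq, IH, E.
Qed.

Lemma stripe5_transl k c a b : k = 2 \/ k = 3 -> on_slope5 k a b ->
  forall s, stripe5 k c (gstrand (transl a b) s) = (1 * stripe5 k c s + a) mod 5.
Proof.
  unfold on_slope5, stripe5; intros Hk Hab [i|j];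
    cbn [gstrand transl sgn g_swap g_neg1 g_neg2 g_t1 g_t2]; destruct Hk as [-> | ->]; mod5.
Qed.

Lemma stripe5_qturn k c a1 a2 : k = 2 \/ k = 3 -> c = 3 * (1 - k) * (a1 + k * a2) ->
  forall s, stripe5 k c (gstrand (GMap true true false a1 a2) s)
            = (- k * stripe5 k c s + (a1 - c)) mod 5.
Proof.
  unfold stripe5; intros Hk Hc [i|j]; cbn [gstrand sgn g_swap g_neg1 g_neg2 g_t1 g_t2];
    destruct Hk as [-> | ->]; subst c; mod5.
Qed.

Lemma stripe5_perfect D k c a1 a2 e :
  k = 2 \/ k = 3 -> c = 3 * (1 - k) * (a1 + k * a2) ->
  (forall a b eps, is_sym D (transl a b) eps -> on_slope5 k a b) ->
  is_sym D (GMap true true false a1 a2) e ->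
  (forall g eps, is_sym D g eps -> reverses g = false) ->
  perfect D (stripe5 k c).
Proof.
  intros Hk Hc Hslope Hq Hrev g eps Hg.
  set (q := GMap true true false a1 a2) in *.
  destruct (rotation_linear_part g a1 a2 (Hrev g eps Hg)) as [m Hm].
  destruct (gcomp_ginv_transl _ _ Hm) as [a [b Ht]].
  destruct (is_sym_gpow D q e m Hq) as [e' Hpow].
  assert (Hab : on_slope5 k a b).
  { apply (Hslope a b (xorb eps e')). rewrite <- Ht.
    apply is_sym_gcomp; [exact Hg | apply is_sym_ginv, Hpow]. }
  assert (Hg_eq : forall s, gstrand g s = gstrand (transl a b) (gstrand (gpow q m) s)).
  { intros s. rewrite <- Ht, gstrand_gcomp, gstrand_ginv_l. reflexivity. }
  intros s s' E. rewrite !Hg_eq.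
  apply (respects_affine _ _ 1 a (stripe5_transl k c a b Hk Hab)).
  apply (respects_gpow _ q m (respects_affine _ _ _ _ (stripe5_qturn k c a1 a2 Hk Hc)) _ _ E).
Qed.

Lemma area5_perfect_striping D P1 P2 M N L M1 N1 :
  lattice_unit D P1 P2 M N -> (M, N) = lbase L M1 N1 -> M1 * M1 + N1 * N1 = 5 ->
  (forall g eps, is_sym D g eps -> reverses g = false) ->
  exists col, thin_striping 5 col /\ perfect D col /\ redundant_as_satin53 col.
Proof.
  intros [_ [Hlat [[e Hq] _]]] HL H5 Hrev.
  destruct (lbase_area5_slope L M1 N1 M N H5 HL) as [k [Hk [HM HN]]].
  set (a1 := (P1 + P2) / 2) in *. set (a2 := (P2 - P1) / 2) in *.
  (* [c] solves (k + 1) c = a1 + k a2 (mod 5), which makes the quarter turn affine on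
     colours. *)
  exists (stripe5 k (3 * (1 - k) * (a1 + k * a2))). split; [|split].
  - apply stripe5_thin, Hk.
  - apply (stripe5_perfect D k _ a1 a2 e Hk eq_refl); [|exact Hq|exact Hrev].
    intros a b eps Hs. apply (on_slope5_lattice k M N a b HM HN).
    exact (proj1 (Hlat a b) (ex_intro _ eps Hs)).
  - apply stripe5_satin53, Hk.
Qed.

(** * Deciding properties of periodic designs *)

Definition range (p : Z) : list Z := map Z.of_nat (seq 0 (Z.to_nat p)).

Lemma in_range p x : In x (range p) <-> 0 <= x < p.
Proof.
  unfold range. rewrite in_map_iff. split.
  - intros [k [<- Hk]]. apply in_seq in Hk. lia.
  - intros Hx. exists (Z.to_nat x). rewrite in_seq. lia.
Qed.

(* Call-by-value evaluation of [forallb] does not short-circuit. *)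
Fixpoint forallb_lazy {A : Type} (f : A -> bool) (l : list A) : bool :=
  match l with [] => true | x :: l => if f x then forallb_lazy f l else false end.

Lemma forallb_lazy_spec {A : Type} (f : A -> bool) l :
  forallb_lazy f l = true <-> forall x, In x l -> f x = true.
Proof.
  induction l as [|y l IH]; simpl; [tauto|].
  destruct (f y) eqn:E; rewrite ?IH; split; try discriminate.
  - intros H x [<-|Hx]; auto.
  - auto.
  - intros H. rewrite H in E; auto.
Qed.

Definition periodic (D : design) (p : Z) : Prop :=
  forall i j, D i j = D (i mod p) (j mod p).

Lemma doubly_periodic_of_periodic D p : 0 < p -> periodic D p -> doubly_periodic D.
Proof.
  intros Hp HD. exists p. split; [exact Hp|]. intros i j.
  rewrite (HD (i + p) j), (HD i (j + p)), (HD i j).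
  rewrite <- (Z.add_mod_idemp_r i p), <- (Z.add_mod_idemp_r j p), Z.mod_same, !Z.add_0_r
    by lia.
  split; reflexivity.
Qed.

Definition gmap_mod (p : Z) (g : gmap) : gmap :=
  GMap (g_swap g) (g_neg1 g) (g_neg2 g) (g_t1 g mod p) (g_t2 g mod p).

Definition bools : list bool := [false; true].

Definition gmaps_mod (p : Z) : list gmap :=
  flat_map (fun sw => flat_map (fun n1 => flat_map (fun n2 => flat_map (fun t1 =>
    map (GMap sw n1 n2 t1) (range p)) (range p)) bools) bools) bools.

Lemma in_bools b : In b bools.
Proof. destruct b; simpl; auto. Qed.

Lemma in_gmaps_mod p g : 0 < p -> In (gmap_mod p g) (gmaps_mod p).
Proof.
  intros Hp. destruct g as [sw n1 n2 t1 t2].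
  unfold gmap_mod, gmaps_mod; cbn [g_swap g_neg1 g_neg2 g_t1 g_t2].
  repeat (rewrite in_flat_map; eexists; split; [apply in_bools|]).
  rewrite in_flat_map. exists (t1 mod p). split; [apply in_range, Z.mod_pos_bound, Hp|].
  apply in_map, in_range, Z.mod_pos_bound, Hp.
Qed.

Definition lattice_point_b (M N a b : Z) : bool :=
  ((a * M + b * N) mod (M * M + N * N) =? 0) && ((b * M - a * N) mod (M * M + N * N) =? 0).

Lemma lattice_point_b_spec M N a b :
  0 < M * M + N * N -> lattice_point_b M N a b = true <-> lattice_point M N a b.
Proof.
  intros HA. unfold lattice_point_b. rewrite andb_true_iff, !Z.eqb_eq, !Z.mod_divide by lia.
  split.
  - intros [[x Hx] [y Hy]]. exists x, y.
    split; apply (Z.mul_cancel_l _ _ (M * M + N * N)); try lia.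
    + transitivity (M * (a * M + b * N) - N * (b * M - a * N)); [ring|].
      rewrite Hx, Hy. ring.
    + transitivity (N * (a * M + b * N) + M * (b * M - a * N)); [ring|].
      rewrite Hx, Hy. ring.
  - intros [x [y [-> ->]]]. split; [exists x | exists y]; ring.
Qed.

Lemma lattice_point_shift M N a b u v p :
  lattice_point M N p 0 -> lattice_point M N 0 p -> lattice_point M N a b ->
  lattice_point M N (a + u * p) (b + v * p).
Proof.
  intros [x1 [y1 [E1 F1]]] [x2 [y2 [E2 F2]]] [x [y [-> ->]]].
  exists (x + u * x1 + v * x2), (y + u * y1 + v * y2).
  split.
  - transitivity (x * M - y * N + u * (x1 * M - y1 * N) + v * (x2 * M - y2 * N));
      [rewrite <- E1, <- E2 | ]; ring.
  - transitivity (x * N + y * M + u * (x1 * N + y1 * M) + v * (x2 * N + y2 * M));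
      [rewrite <- F1, <- F2 | ]; ring.
Qed.

Lemma lattice_point_of_mod M N a b p :
  lattice_point M N p 0 -> lattice_point M N 0 p ->
  lattice_point M N (a mod p) (b mod p) -> lattice_point M N a b.
Proof.
  intros Hx Hy H.
  replace a with (a mod p + (a / p) * p) by (pose proof (Z_div_mod_eq_full a p); lia).
  replace b with (b mod p + (b / p) * p) by (pose proof (Z_div_mod_eq_full b p); lia).
  apply lattice_point_shift; assumption.
Qed.

Definition strand_eq_dec (s t : strand) : {s = t} + {s <> t}.
Proof. decide equality; apply Z.eq_dec. Defined.

Definition strand_mod (p : Z) (s : strand) : strand :=
  match s with Warp i => Warp (i mod p) | Weft j => Weft (j mod p) end.

Definition strands_mod (p : Z) : list strand := map Warp (range p) ++ map Weft (range p).

Lemma in_strands_mod p s : 0 < p -> In (strand_mod p s) (strands_mod p).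
Proof.
  intros Hp. unfold strands_mod. rewrite in_app_iff.
  destruct s as [i|j]; simpl; [left | right]; apply in_map, in_range, Z.mod_pos_bound, Hp.
Qed.

Definition strand_memb (s : strand) (l : list strand) : bool :=
  if in_dec strand_eq_dec s l then true else false.

Lemma strand_memb_spec s l : strand_memb s l = true -> In s l.
Proof. unfold strand_memb. destruct (in_dec strand_eq_dec s l); [auto | discriminate]. Qed.

Lemma strand_mod_eq_transl p s t : strand_mod p s = strand_mod p t ->
  exists d, eqm p d 0 /\ gstrand (transl d d) t = s.
Proof.
  unfold eqm. destruct s as [i|j], t as [i'|j']; simpl; intros E; try discriminate;
    injection E as E; [exists (i - i') | exists (j - j')];
    (split; [rewrite Zminus_mod, E, Z.sub_diag; reflexivity | f_equal; ring]).
Qed.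

Lemma strand_mod_gstrand p h s t : strand_mod p s = strand_mod p t ->
  strand_mod p (gstrand h s) = strand_mod p (gstrand h t).
Proof.
  destruct s as [i|j], t as [i'|j']; simpl; intros E; try discriminate; injection E as E;
    destruct h as [[] [] [] t1 t2]; cbn [gstrand strand_mod sgn g_swap g_neg1 g_neg2 g_t1 g_t2];
    f_equal; repeat first [apply Zplus_eqm | apply Zopp_eqm | exact E | apply eqm_refl].
Qed.

Section Closure.

Context {T : Type} (T_eq_dec : forall x y : T, {x = y} + {x <> y}).
Variables (r : T -> T -> bool) (universe : list T).

Definition closure_step (seen : list T) : list T :=
  filter (fun y => existsb (fun x => if T_eq_dec x y then true else r x y) seen) universe.

Lemma closure_invariant (P : T -> Prop) n seen :
  (forall x y, P x -> r x y = true -> P y) -> (forall x, In x seen -> P x) ->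
  forall y, In y (Nat.iter n closure_step seen) -> P y.
Proof.
  intros Hr. induction n as [|n IH]; simpl; intros Hseen y Hy; [exact (Hseen y Hy)|].
  unfold closure_step in Hy. apply filter_In in Hy as [_ Hy].
  apply existsb_exists in Hy as [x [Hx Exy]].
  destruct (T_eq_dec x y) as [<-|_]; [|apply (Hr x)]; auto.
Qed.

End Closure.

Definition under (D : design) (s t : strand) : bool :=
  match s, t with
  | Warp i, Weft j => negb (D i j)
  | Weft j, Warp i => D i j
  | _, _ => false
  end.

Lemma under_lifted D (A : strand -> Prop) s t :
  (forall i j, (A (Warp i) -> ~ A (Weft j) -> D i j = true) /\
               (A (Weft j) -> ~ A (Warp i) -> D i j = false)) ->
  under D s t = true -> ~ ~ A s -> ~ ~ A t.
Proof.
  intros Hlift E HAs HAt. apply HAs. intros HA.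
  destruct s as [i|j], t as [i'|j']; simpl in E; try discriminate.
  - destruct (Hlift i j') as [H _]. rewrite (H HA HAt) in E. discriminate.
  - destruct (Hlift i' j) as [_ H]. rewrite (H HA HAt) in E. discriminate.
Qed.

Definition has_period_b (p : Z) (f : Z -> bool) (m : Z) : bool :=
  forallb_lazy (fun k => Bool.eqb (f (k + m)) (f k)) (range p).

Lemma has_period_b_spec p f m : 0 < p -> (forall k, f k = f (k mod p)) ->
  has_period_b p f m = true <-> has_period f m.
Proof.
  intros Hp Hf. unfold has_period_b, has_period. rewrite forallb_lazy_spec. split.
  - intros H k.
    assert (Hk : In (k mod p) (range p)) by (apply in_range, Z.mod_pos_bound, Hp).
    pose proof (eqb_prop _ _ (H _ Hk)) as E.
    rewrite (Hf (k + m)), (Hf k), <- Z.add_mod_idemp_l, <- Hf, E by lia. reflexivity.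
  - intros H k _. rewrite H. apply eqb_reflx.
Qed.

Definition min_period_b (p : Z) (f : Z -> bool) (n : Z) : bool :=
  (0 <? n) && has_period_b p f n &&
  forallb_lazy (fun m => negb (has_period_b p f m)) (filter (Z.ltb 0) (range n)).

Lemma min_period_b_spec p f n : 0 < p -> (forall k, f k = f (k mod p)) ->
  min_period_b p f n = true -> min_period f n.
Proof.
  intros Hp Hf H. unfold min_period_b in H. rewrite !andb_true_iff, Z.ltb_lt in H.
  destruct H as [[Hn Hper] Hmin]. rewrite has_period_b_spec in Hper by assumption.
  split; [exact Hn | split; [exact Hper|]].
  intros m Hm Hperm. rewrite forallb_lazy_spec in Hmin.
  assert (Hin : In m (filter (Z.ltb 0) (range n))).
  { apply filter_In. rewrite in_range, Z.ltb_lt. lia. }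
  specialize (Hmin _ Hin). rewrite <- (has_period_b_spec p f m) in Hperm by assumption.
  rewrite Hperm in Hmin. discriminate.
Qed.

Lemma min_period_ext f g n : (forall k, f k = g k) -> min_period f n -> min_period g n.
Proof.
  unfold min_period, has_period. intros E [Hn [Hper Hmin]].
  split; [exact Hn | split].
  - intros k. rewrite <- !E. apply Hper.
  - intros m Hm Hg. apply (Hmin m Hm). intros k. rewrite !E. apply Hg.
Qed.

Definition residue_closure (p : Z) (r : strand -> strand -> bool) (init : list strand)
  : list strand :=
  Nat.iter (List.length (strands_mod p)) (closure_step strand_eq_dec r (strands_mod p)) init.

Definition orbit_step_b (p : Z) (gens : list gmap) (x y : strand) : bool :=
  existsb (fun h => if strand_eq_dec (strand_mod p (gstrand h x)) y then true else false) gens.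

Definition warp0_orbit (p : Z) (gens : list gmap) : list strand :=
  residue_closure p (orbit_step_b p gens) [Warp 0].

Definition warp0_orbit_full_b (p : Z) (gens : list gmap) : bool :=
  let orbit := warp0_orbit p gens in
  forallb_lazy (fun s => strand_memb s orbit) (strands_mod p).

Section PeriodicDesign.

Variables (D : design) (p : Z).
Hypotheses (p_pos : 0 < p) (D_periodic : periodic D p).

Definition is_sym_b (g : gmap) (eps : bool) : bool :=
  forallb_lazy (fun i => forallb_lazy (fun j =>
      Bool.eqb (D (fst (gapp g (i, j))) (snd (gapp g (i, j))))
               (xorb (D i j) (xorb (g_swap g) eps)))
    (range p)) (range p).

Lemma periodic_eqm i j i' j' : eqm p i i' -> eqm p j j' -> D i j = D i' j'.
Proof.
  intros Hi Hj. rewrite (D_periodic i j), (D_periodic i' j'), Hi, Hj. reflexivity.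
Qed.

Lemma gapp_eqm g i j i' j' : eqm p i i' -> eqm p j j' ->
  eqm p (fst (gapp g (i, j))) (fst (gapp g (i', j'))) /\
  eqm p (snd (gapp g (i, j))) (snd (gapp g (i', j'))).
Proof.
  intros Hi Hj.
  destruct g as [[] [] [] t1 t2]; cbn [gapp sgn fst snd g_swap g_neg1 g_neg2 g_t1 g_t2];
    split; repeat first [apply Zplus_eqm | apply Zopp_eqm | assumption | apply eqm_refl].
Qed.

Lemma gapp_gmap_mod g c :
  eqm p (fst (gapp (gmap_mod p g) c)) (fst (gapp g c)) /\
  eqm p (snd (gapp (gmap_mod p g) c)) (snd (gapp g c)).
Proof.
  destruct g as [[] [] [] t1 t2], c as [i j];
    cbn [gmap_mod gapp sgn fst snd g_swap g_neg1 g_neg2 g_t1 g_t2];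
    split; repeat first [apply Zplus_eqm | apply Zopp_eqm | apply Zmod_eqm | apply eqm_refl].
Qed.

Lemma is_sym_gmap_mod g eps : is_sym D (gmap_mod p g) eps <-> is_sym D g eps.
Proof.
  assert (E : forall i j,
             D (fst (gapp (gmap_mod p g) (i, j))) (snd (gapp (gmap_mod p g) (i, j)))
             = D (fst (gapp g (i, j))) (snd (gapp g (i, j)))).
  { intros i j. destruct (gapp_gmap_mod g (i, j)). apply periodic_eqm; assumption. }
  split; intros H i j; [rewrite <- E | rewrite E]; apply H.
Qed.

Lemma is_sym_b_spec g eps : is_sym_b g eps = true <-> is_sym D g eps.
Proof.
  unfold is_sym_b. rewrite forallb_lazy_spec. split.
  - intros H i j.
    assert (Hi : In (i mod p) (range p)) by (apply in_range, Z.mod_pos_bound, p_pos).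
    assert (Hj : In (j mod p) (range p)) by (apply in_range, Z.mod_pos_bound, p_pos).
    specialize (H _ Hi). rewrite forallb_lazy_spec in H. specialize (H _ Hj).
    apply eqb_prop in H.
    destruct (gapp_eqm g i j (i mod p) (j mod p)) as [E1 E2];
      try (symmetry; apply Zmod_eqm).
    rewrite (periodic_eqm _ _ _ _ E1 E2), H, <- D_periodic. reflexivity.
  - intros H i _. apply forallb_lazy_spec. intros j _. rewrite H. apply eqb_reflx.
Qed.

Definition symmetry_b (g : gmap) : bool := is_sym_b g false || is_sym_b g true.

Lemma symmetry_b_spec g : symmetry_b g = true <-> exists eps, is_sym D g eps.
Proof.
  unfold symmetry_b. rewrite orb_true_iff, !is_sym_b_spec. split.
  - intros [H|H]; eexists; exact H.
  - intros [[] H]; auto.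
Qed.

Lemma is_sym_transl_period a b : eqm p a 0 -> eqm p b 0 -> is_sym D (transl a b) false.
Proof.
  intros Ha Hb. apply is_sym_gmap_mod. unfold eqm in Ha, Hb.
  unfold gmap_mod, transl; cbn [g_swap g_neg1 g_neg2 g_t1 g_t2].
  rewrite Ha, Hb, !Z.mod_0_l by lia. apply is_sym_transl0.
Qed.

Definition translations_b (M N : Z) : bool :=
  symmetry_b (transl M N) && symmetry_b (transl (- N) M) &&
  forallb_lazy (fun a => forallb_lazy (fun b =>
    if lattice_point_b M N a b then true else negb (symmetry_b (transl a b)))
    (range p)) (range p).

Lemma translations_b_spec M N :
  0 < M * M + N * N -> lattice_point M N p 0 -> lattice_point M N 0 p ->
  translations_b M N = true ->
  forall a b, (exists eps, is_sym D (transl a b) eps) <-> lattice_point M N a b.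
Proof.
  intros HA Hx Hy H a b. unfold translations_b in H.
  rewrite !andb_true_iff, !symmetry_b_spec, forallb_lazy_spec in H.
  destruct H as [[[eM HM] [eN HN]] H]. split.
  - intros [eps Hs].
    apply (lattice_point_of_mod M N a b p Hx Hy), (lattice_point_b_spec _ _ _ _ HA).
    assert (Ha : In (a mod p) (range p)) by (apply in_range, Z.mod_pos_bound, p_pos).
    assert (Hb : In (b mod p) (range p)) by (apply in_range, Z.mod_pos_bound, p_pos).
    specialize (H _ Ha). rewrite forallb_lazy_spec in H. specialize (H _ Hb).
    destruct (lattice_point_b M N (a mod p) (b mod p)); [reflexivity|].
    assert (Hs' : symmetry_b (transl (a mod p) (b mod p)) = true).
    { apply symmetry_b_spec. exists eps. exact (proj2 (is_sym_gmap_mod (transl a b) eps) Hs). }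
    rewrite Hs' in H. discriminate.
  - exact (is_sym_lattice_transl D M N eM eN HM HN a b).
Qed.

Definition orientation_preserving_b : bool :=
  forallb_lazy (fun g => negb (symmetry_b g)) (filter reverses (gmaps_mod p)).

Lemma orientation_preserving_b_spec :
  orientation_preserving_b = true -> forall g eps, is_sym D g eps -> reverses g = false.
Proof.
  intros H g eps Hg. unfold orientation_preserving_b in H. rewrite forallb_lazy_spec in H.
  destruct (reverses g) eqn:E; [exfalso|reflexivity].
  assert (Hin : In (gmap_mod p g) (filter reverses (gmaps_mod p)))
    by (apply filter_In; split; [apply in_gmaps_mod, p_pos | exact E]).
  assert (Hs : symmetry_b (gmap_mod p g) = true).
  { apply symmetry_b_spec. exists eps. apply is_sym_gmap_mod, Hg. }
  specialize (H _ Hin). rewrite Hs in H. discriminate.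
Qed.

Lemma strand_mod_idem s : strand_mod p (strand_mod p s) = strand_mod p s.
Proof. destruct s; simpl; rewrite Z.mod_mod by lia; reflexivity. Qed.

Lemma isonemal_of_warp0_orbit_full gens :
  (forall h, In h gens -> exists eps, is_sym D h eps) ->
  warp0_orbit_full_b p gens = true -> isonemal D.
Proof.
  intros Hgens H. apply isonemal_of_warp0_orbit. intros s.
  assert (Horbit : In (strand_mod p s) (warp0_orbit p gens)).
  { unfold warp0_orbit_full_b in H. rewrite forallb_lazy_spec in H.
    exact (strand_memb_spec _ _ (H _ (in_strands_mod p s p_pos))). }
  assert (Hreach : exists g eps, is_sym D g eps /\
                     strand_mod p (gstrand g (Warp 0)) = strand_mod p (strand_mod p s)).
  { refine (closure_invariant _ _ _
              (fun x => exists g eps, is_sym D g eps /\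
                          strand_mod p (gstrand g (Warp 0)) = strand_mod p x)
              _ _ _ _ _ Horbit).
    - intros x y [g [eps [Hg Ex]]] Exy.
      apply existsb_exists in Exy as [h [Hh Ehy]].
      destruct (strand_eq_dec (strand_mod p (gstrand h x)) y) as [<-|]; [|discriminate].
      destruct (Hgens h Hh) as [eh Hsh].
      exists (gcomp h g), (xorb eh eps). split; [exact (is_sym_gcomp D _ _ _ _ Hsh Hg)|].
      rewrite gstrand_gcomp, strand_mod_idem. apply strand_mod_gstrand, Ex.
    - intros x [<-|[]]. exists (transl 0 0), false.
      split; [apply is_sym_transl0 | reflexivity]. }
  destruct Hreach as [g [eps [Hg Es]]]. rewrite strand_mod_idem in Es.
  destruct (strand_mod_eq_transl p _ _ (eq_sym Es)) as [d [Hd Et]].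
  exists (gcomp (transl d d) g), (xorb false eps). split.
  - exact (is_sym_gcomp D _ _ _ _ (is_sym_transl_period d d Hd Hd) Hg).
  - rewrite gstrand_gcomp. exact Et.
Qed.

Lemma under_mod s t : under D s t = under D (strand_mod p s) (strand_mod p t).
Proof.
  destruct s as [i|j], t as [i'|j']; simpl;
    [| rewrite (D_periodic i j') | rewrite (D_periodic i' j) |]; reflexivity.
Qed.

Definition above_root : list strand :=
  residue_closure p (under D) (filter (under D (Warp 0)) (strands_mod p)).

Definition below_root : list strand := residue_closure p (fun x y => under D y x) [Warp 0].

(* A lifted strand never lies under an unlifted one; since every residue class is reached
   from [Warp 0] by a nonempty [under]-path and reaches [Warp 0], one lifted strand forces
   all strands to be lifted. *)
Definition hangs_together_b : bool :=
  (* bound once, so that [vm_compute] does not rebuild the closures for every strand *)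
  let above := above_root in
  let below := below_root in
  forallb_lazy (fun s => strand_memb s above && strand_memb s below) (strands_mod p).

Lemma hangs_together_b_spec : hangs_together_b = true -> ~ falls_apart D.
Proof.
  intros H [A [[s0 HA0] [[s1 HA1] Hlift]]].
  set (some_lifted x := exists s, strand_mod p s = strand_mod p x /\ ~ ~ A s).
  set (all_lifted x := forall s, strand_mod p s = strand_mod p x -> ~ ~ A s).
  assert (Hedge : forall x y, under D x y = true -> some_lifted x -> all_lifted y).
  { intros x y E [s [Es HAs]] t Et. apply (under_lifted D A s t Hlift); [|exact HAs].
    rewrite under_mod, Es, Et, <- under_mod. exact E. }
  assert (Hsome : forall x, all_lifted x -> some_lifted x).
  { intros x Hx. exists x. split; [reflexivity | apply Hx; reflexivity]. }
  assert (Hreached : forall s,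
             In (strand_mod p s) above_root /\ In (strand_mod p s) below_root).
  { intros s. unfold hangs_together_b in H. rewrite forallb_lazy_spec in H.
    specialize (H _ (in_strands_mod p s p_pos)). apply andb_true_iff in H as [H1 H2].
    split; apply strand_memb_spec; assumption. }
  assert (Hroot : some_lifted (Warp 0)).
  { refine (closure_invariant _ _ _ (fun x => some_lifted x -> some_lifted (Warp 0))
              _ _ _ _ _ (proj2 (Hreached s0)) _).
    - intros y x Hy E Hx. apply Hy, Hsome, (Hedge x y E Hx).
    - intros x [<-|[]]; auto.
    - exists s0. split; [symmetry; apply strand_mod_idem | intros HnA; exact (HnA HA0)]. }
  refine (closure_invariant _ _ _ all_lifted _ _ _ _ _ (proj1 (Hreached s1)) _ _ HA1).
  - intros x y Hx E. exact (Hedge x y E (Hsome x Hx)).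
  - intros x Hx. apply filter_In in Hx as [_ E]. exact (Hedge _ x E Hroot).
  - symmetry. apply strand_mod_idem.
Qed.

Definition order_b (n : Z) : bool :=
  forallb_lazy (fun i => min_period_b p (fun j => D i j) n && min_period_b p (fun j => D j i) n)
    (range p).

Lemma order_b_spec n : order_b n = true -> has_order D n.
Proof.
  intros H. unfold order_b in H. rewrite forallb_lazy_spec in H.
  assert (Hrow : forall i, min_period_b p (fun j => D (i mod p) j) n = true /\
                           min_period_b p (fun j => D j (i mod p)) n = true).
  { intros i. apply andb_true_iff, H, in_range, Z.mod_pos_bound, p_pos. }
  split; intros i; destruct (Hrow i) as [Hw Hf].
  - apply (min_period_ext (fun j => D (i mod p) j)).
    + intros j. rewrite (D_periodic i j), (D_periodic (i mod p) j), Z.mod_mod by lia.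
      reflexivity.
    + apply (min_period_b_spec p _ n p_pos); [|exact Hw].
      intros k. rewrite D_periodic, Z.mod_mod by lia. reflexivity.
  - apply (min_period_ext (fun j => D j (i mod p))).
    + intros j. rewrite (D_periodic j i), (D_periodic j (i mod p)), Z.mod_mod by lia.
      reflexivity.
    + apply (min_period_b_spec p _ n p_pos); [|exact Hf].
      intros k. rewrite D_periodic, Z.mod_mod by lia. reflexivity.
Qed.

End PeriodicDesign.

Definition p4_fabric_b (D : design) (p P1 P2 M N : Z) (eP eQ : bool) (n : Z) : bool :=
  let '(Q1, Q2) := lu_centre P1 P2 M N in
  (0 <? p) && (0 <? M * M + N * N) && Z.even (P1 + P2) &&
  lattice_point_b M N p 0 && lattice_point_b M N 0 p &&
  translations_b D p M N && orientation_preserving_b D p &&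
  is_sym_b D p (qturn P1 P2) eP && is_sym_b D p (qturn Q1 Q2) eQ &&
  hangs_together_b D p && warp0_orbit_full_b p [transl M N; transl (- N) M; qturn P1 P2] &&
  order_b D p n.

Lemma p4_fabric_b_spec D p P1 P2 M N eP eQ n :
  periodic D p -> p4_fabric_b D p P1 P2 M N eP eQ n = true ->
  is_fabric D /\ isonemal D /\ p4_type D /\ lattice_unit D P1 P2 M N /\
  is_sym D (qturn P1 P2) eP /\
  is_sym D (qturn (fst (lu_centre P1 P2 M N)) (snd (lu_centre P1 P2 M N))) eQ /\
  has_order D n.
Proof.
  intros HD H. unfold p4_fabric_b in H. simpl in H. rewrite !andb_true_iff, !Z.ltb_lt in H.
  destruct H as [[[[[[[[[[[Hp HA] Heven] Hx] Hy] Htr] Hrev] HP] HQ] Hhang] Hiso] Hord].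
  rewrite lattice_point_b_spec in Hx, Hy by exact HA.
  rewrite is_sym_b_spec in HP, HQ by assumption.
  pose proof (translations_b_spec D p Hp HD M N HA Hx Hy Htr) as Hlat.
  assert (Hgens : forall h, In h [transl M N; transl (- N) M; qturn P1 P2] ->
                            exists eps, is_sym D h eps).
  { intros h [<-|[<-|[<-|[]]]]; [apply Hlat; exists 1, 0 | apply Hlat; exists 0, 1 | eauto].
    - split; ring.
    - split; ring. }
  split; [|split; [|split; [|split; [|split; [|split]]]]].
  - split; [apply (doubly_periodic_of_periodic D p Hp HD)|].
    exact (hangs_together_b_spec D p Hp HD Hhang).
  - exact (isonemal_of_warp0_orbit_full D p Hp HD _ Hgens Hiso).
  - split; [exists (qturn P1 P2), eP; split; [exact HP | reflexivity]|].
    exact (orientation_preserving_b_spec D p Hp HD Hrev).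
  - split; [exact Heven | split; [exact Hlat | split; [exists eP | exists eQ]; assumption]].
  - exact HP.
  - exact HQ.
  - exact (order_b_spec D p Hp HD n Hord).
Qed.

(** * Witnesses *)

(* String i of [rows] lists the cells (i, 0), ..., (i, p - 1) along warp i; "X" marks a
   dark cell. *)
Definition design_of_rows (p : Z) (rows : list string) : design :=
  fun i j => match get (Z.to_nat (j mod p)) (nth (Z.to_nat (i mod p)) rows ""%string) with
             | Some c => Ascii.eqb c "X"%char
             | None => false
             end.

Lemma design_of_rows_periodic p rows : 0 < p -> periodic (design_of_rows p rows) p.
Proof. intros Hp i j. unfold design_of_rows. rewrite !Z.mod_mod by lia. reflexivity. Qed.

Record witness : Type := Witness {
  w_period : Z; w_rows : list string; w_order : Z;
  w_P1 : Z; w_P2 : Z; w_level : level; w_eP : bool; w_eQ : bool }.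

Definition w_design (w : witness) : design := design_of_rows (w_period w) (w_rows w).

Definition w_unit (w : witness) : Z * Z := lbase (w_level w) 1 2.

Definition witness_b (w : witness) : bool :=
  p4_fabric_b (w_design w) (w_period w) (w_P1 w) (w_P2 w) (fst (w_unit w)) (snd (w_unit w))
    (w_eP w) (w_eQ w) (w_order w).

Lemma witness_b_spec S w :
  witness_b w = true -> subspecies_cond S (w_level w) (w_eP w) (w_eQ w) (Z.odd (w_P1 w)) ->
  in_subspecies (w_design w) S /\ has_order (w_design w) (w_order w) /\
  based_on_area (w_design w) 5.
Proof.
  intros H HS. unfold witness_b in H. destruct (w_unit w) as [M N] eqn:EMN.
  assert (Hp : 0 < w_period w).
  { unfold p4_fabric_b in H. simpl in H. rewrite !andb_true_iff, Z.ltb_lt in H. tauto. }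
  destruct (p4_fabric_b_spec _ _ _ _ _ _ _ _ _ (design_of_rows_periodic _ _ Hp) H)
    as [HF [HI [HP4 [HLU [HP [HQ HO]]]]]].
  assert (H12 : level1 1 2) by (split; [reflexivity | discriminate]).
  split; [|split; [exact HO|]].
  - repeat (split; [assumption|]).
    exists (w_P1 w), (w_P2 w), M, N, (w_level w), (w_eP w), (w_eQ w).
    split; [exact HLU | split; [|split; [exact HP | split; [exact HQ | exact HS]]]].
    exists 1, 2. split; [exact H12 | symmetry; exact EMN].
  - exists (w_P1 w), (w_P2 w), M, N, (w_level w), 1, 2.
    split; [exact HLU | split; [exact H12 | split; [symmetry; exact EMN | reflexivity]]].
Qed.

Definition witness_of (S : subspecies) : witness :=
  match S with
  | S33_3 => Witness 10
    [".XXX....XX";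
     "X.XX....XX";
     "..XX.XXX..";
     "..XXX.XX..";
     "XX....XX.X";
     "XX....XXX.";
     "XX.XXX....";
     "XXX.XX....";
     "....XX.XXX";
     "....XXX.XX"]%string
    10 1 1 L3 false false
  | S33_4 => Witness 20
    [".X.XX.XXXXX......XX.";
     "X..XX......XXXXX.XX.";
     "XXXXX......XX..X.XX.";
     ".....XXXXX.XX.X..XX.";
     ".....XX..X.XX.XXXXX.";
     "XXXX.XX.X..XX......X";
     "X..X.XX.XXXXX......X";
     "X.X..XX......XXXXX.X";
     "X.XXXXX......XX..X.X";
     "X......XXXXX.XX.X..X";
     "X......XX..X.XX.XXXX";
     ".XXXXX.XX.X..XX.....";
     ".XX..X.XX.XXXXX.....";
     ".XX.X..XX......XXXXX";
     ".XX.XXXXX......XX..X";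
     ".XX......XXXXX.XX.X.";
     "XXX......XX..X.XX.XX";
     "...XXXXX.XX.X..XX...";
     "...XX..X.XX.XXXXX...";
     "XX.XX.X..XX......XXX"]%string
    20 1 1 L4 false false
  | S34 => Witness 10
    ["X.X.XX...X";
     ".XX...XX.X";
     "...XX.X.XX";
     "XX.X.XX...";
     "X.XX...XX.";
     "X...XX.X.X";
     ".XX.X.XX..";
     ".X.XX...XX";
     "XX...XX.X.";
     "..XX.X.XX."]%string
    10 1 1 L2 false false
  | S35_3 => Witness 10
    ["...XX.X..X";
     "..X..X.XX.";
     "X..X...XX.";
     ".XX...X..X";
     ".XX.X..X..";
     "X..X.XX...";
     ".X...XX.X.";
     "X...X..X.X";
     "X.X..X...X";
     ".X.XX...X."]%string
    10 1 1 L3 true true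
  | S35_4 => Witness 20
    ["XXX..X.XX...X..X.XX.";
     "XX.XX.X..X...XX.X..X";
     ".XX...X..X.XX.XXX..X";
     "X..X...XX.X..XXX.XX.";
     "X..X.XX.XXX..X.XX...";
     ".XX.X..XXX.XX.X..X..";
     "X.XXX..X.XX...X..X.X";
     ".XXX.XX.X..X...XX.X.";
     ".X.XX...X..X.XX.XXX.";
     "X.X..X...XX.X..XXX.X";
     "..X..X.XX.XXX..X.XX.";
     "...XX.X..XXX.XX.X..X";
     ".XX.XXX..X.XX...X..X";
     "X..XXX.XX.X..X...XX.";
     "X..X.XX...X..X.XX.XX";
     ".XX.X..X...XX.X..XXX";
     "X...X..X.XX.XXX..X.X";
     ".X...XX.X..XXX.XX.X.";
     ".X.XX.XXX..X.XX...X.";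
     "X.X..XXX.XX.X..X...X"]%string
    20 1 1 L4 true true
  | S36_1 => Witness 5
    ["XX.XX";
     "XXXX.";
     "X.XXX";
     "XXX.X";
     ".XXXX"]%string
    5 1 1 L1 true true
  | S36_2 => Witness 10
    ["XXXXX..X..";
     "XX..X..XXX";
     ".X..XXXXX.";
     ".XXXXX..X.";
     "XXX..X..XX";
     "..X..XXXXX";
     "..XXXXX..X";
     "XXXX..X..X";
     "X..X..XXXX";
     "X..XXXXX.."]%string
    10 1 1 L2 true true
  | S36_s => Witness 10
    ["X.........";
     ".......X..";
     "....X.....";
     ".X........";
     "........X.";
     ".....X....";
     "..X.......";
     ".........X";
     "......X...";
     "...X......"]%string
    10 0 0 L2 true true
  | S37 => Witness 40
    ["X...XXX...XX...XXXXXX...XXX...XX...XXXXX";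
     ".XXXXXX...XX...XXX...XXXXXX...XX...XXX..";
     ".XXX..XXX......XXX...XXX..XXX......XXX..";
     ".XXX..XXX...XXX......XXX..XXX...XXX.....";
     "...XXXXXX...XXX...XX...XXXXXX...XXX...XX";
     "...XXX...XXXXXX...XX...XXX...XXXXXX...XX";
     "...XXX...XXX..XXX......XXX...XXX..XXX...";
     "XXX......XXX..XXX...XXX......XXX..XXX...";
     "XXX...XX...XXXXXX...XXX...XX...XXXXXX...";
     "XXX...XX...XXX...XXXXXX...XX...XXX...XXX";
     "..XXX......XXX...XXX..XXX......XXX...XXX";
     "..XXX...XXX......XXX..XXX...XXX......XXX";
     "XXXXX...XXX...XX...XXXXXX...XXX...XX...X";
     "XX...XXXXXX...XX...XXX...XXXXXX...XX...X";
     "XX...XXX..XXX......XXX...XXX..XXX......X";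
     ".....XXX..XXX...XXX......XXX..XXX...XXX.";
     "..XX...XXXXXX...XXX...XX...XXXXXX...XXX.";
     "..XX...XXX...XXXXXX...XX...XXX...XXXXXX.";
     "X......XXX...XXX..XXX......XXX...XXX..XX";
     "X...XXX......XXX..XXX...XXX......XXX..XX";
     "X...XXX...XX...XXXXXX...XXX...XX...XXXXX";
     ".XXXXXX...XX...XXX...XXXXXX...XX...XXX..";
     ".XXX..XXX......XXX...XXX..XXX......XXX..";
     ".XXX..XXX...XXX......XXX..XXX...XXX.....";
     "...XXXXXX...XXX...XX...XXXXXX...XXX...XX";
     "...XXX...XXXXXX...XX...XXX...XXXXXX...XX";
     "...XXX...XXX..XXX......XXX...XXX..XXX...";
     "XXX......XXX..XXX...XXX......XXX..XXX...";
     "XXX...XX...XXXXXX...XXX...XX...XXXXXX...";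
     "XXX...XX...XXX...XXXXXX...XX...XXX...XXX";
     "..XXX......XXX...XXX..XXX......XXX...XXX";
     "..XXX...XXX......XXX..XXX...XXX......XXX";
     "XXXXX...XXX...XX...XXXXXX...XXX...XX...X";
     "XX...XXXXXX...XX...XXX...XXXXXX...XX...X";
     "XX...XXX..XXX......XXX...XXX..XXX......X";
     ".....XXX..XXX...XXX......XXX..XXX...XXX.";
     "..XX...XXXXXX...XXX...XX...XXXXXX...XXX.";
     "..XX...XXX...XXXXXX...XX...XXX...XXXXXX.";
     "X......XXX...XXX..XXX......XXX...XXX..XX";
     "X...XXX......XXX..XXX...XXX......XXX..XX"]%string
    20 1 1 L4 false true
  | S38 => Witness 20
    ["X.X...X.XX.X.XXX.X..";
     ".X..X.XXX.X.XX.X...X";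
     "X.XX.X.XXX.X..X.X...";
     "XXX.X.XX.X...X.X..X.";
     ".XXX.X..X.X...X.XX.X";
     "XX.X...X.X..X.XXX.X.";
     "..X.X...X.XX.X.XXX.X";
     ".X.X..X.XXX.X.XX.X..";
     "..X.XX.X.XXX.X..X.X.";
     "X.XXX.X.XX.X...X.X..";
     ".X.XXX.X..X.X...X.XX";
     "X.XX.X...X.X..X.XXX.";
     ".X..X.X...X.XX.X.XXX";
     "...X.X..X.XXX.X.XX.X";
     "X...X.XX.X.XXX.X..X.";
     "..X.XXX.X.XX.X...X.X";
     "XX.X.XXX.X..X.X...X.";
     "X.X.XX.X...X.X..X.XX";
     "XX.X..X.X...X.XX.X.X";
     ".X...X.X..X.XXX.X.XX"]%string
    20 1 1 L3 false true
  | S39 => Witness 10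
    ["X...X.XXX.";
     ".X.XXX.X..";
     "XXX.X...X.";
     ".X...X.XXX";
     "..X.XXX.X.";
     ".XXX.X...X";
     "X.X...X.XX";
     "...X.XXX.X";
     "X.XXX.X...";
     "XX.X...X.X"]%string
    10 1 1 L1 false true
  end.

Lemma witness_of_valid S : witness_b (witness_of S) = true.
Proof. destruct S; vm_compute; reflexivity. Qed.

Lemma witness_of_subspecies_cond S :
  let w := witness_of S in subspecies_cond S (w_level w) (w_eP w) (w_eQ w) (Z.odd (w_P1 w)).
Proof. destruct S; simpl; repeat split; discriminate. Qed.

Theorem theorem1 :
  forall S : subspecies, exists n : Z,
    (exists D : design, in_subspecies D S /\ has_order D n /\ based_on_area D 5) /\
    (forall D : design, in_subspecies D S -> has_order D n -> based_on_area D 5 ->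
       exists col : colouring,
         thin_striping 5 col /\ perfect D col /\ redundant_as_satin53 col).
Proof.
  intros S. exists (w_order (witness_of S)). split.
  - exists (w_design (witness_of S)).
    exact (witness_b_spec S _ (witness_of_valid S) (witness_of_subspecies_cond S)).
  - intros D [_ [_ [[_ Hrev] _]]] _ [P1 [P2 [M [N [L [M1 [N1 [Hlu [_ [HL H5]]]]]]]]]].
    exact (area5_perfect_striping D P1 P2 M N L M1 N1 Hlu HL H5 Hrev).
Qed.
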